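(* Let $u\in\mathcal{B}^N$, $m\in\mathbb{R}$ and $r\in\mathbb{R}^A$ be such that there exists $\sigma$ with $(r,\sigma)\in F(N,A,u,m)$. Then there is $\Lambda>0$ such that for each $0<\Lambda'\le\Lambda$, if $\mu$ is a solution to $\max_{\gamma:N\to A\text{ bijection}}\sum_{i\in N}\log(\lambda_{i\gamma(i)}(u,r,\Lambda'))$, then for each $i\in N$ and each $\sigma$ with $(r,\sigma)\in F(N,A,u,m)$, $u_i(r_{\mu(i)},\mu(i))=u_i(r_{\sigma(i)},\sigma(i))$.
   Context: Fix a finite set $\{\rho_1,\dots,\rho_k\}\subseteq\mathbb{R}_+$ with $\rho_1=0$. $N=\{1,\dots,n\}$ are agents, $A$ a set of $n$ rooms. $\mathcal{B}$ is the set of utility functions $u_i(r_a,a)=v^i_a-r_a-\rho_i\max\{0,r_a-b_i\}$ with $v^i\in\mathbb{R}^A$, $b_i\ge0$, $\rho_i\in\{\rho_1,\dots,\rho_k\}$. An allocation for $(N,A,u,m)$ is $(r,\sigma)$ with $\sigma:N\to A$ a bijection, $r\in\mathbb{R}^A$, $\sum_ar_a=m$; it is envy-free if $u_i(r_{\sigma(i)},\sigma(i))\ge u_i(r_{\sigma(j)},\sigma(j))$ for all $i,j$; $F(N,A,u,m)$ denotes the set of envy-free allocations. $\lambda_{ia}(u,r):=1+\rho_i$ if $r_a>b_i$ and $:=1$ otherwise. For $\Lambda>0$ and $r$ as in the claim, $\lambda_{ia}(u,r,\Lambda):=\lambda_{ia}(u,r)$ if $u_i(r_{\sigma(i)},\sigma(i))=u_i(r_a,a)$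 (for some/any $\sigma$ with $(r,\sigma)$ envy-free), and $\lambda_{ia}(u,r,\Lambda):=\Lambda$ otherwise. *)

From HB Require Import structures.
From mathcomp Require Import all_boot all_order all_algebra.
From mathcomp Require Import boolp reals exp.
Set Implicit Arguments. Unset Strict Implicit. Unset Printing Implicit Defensive.
Import Order.TTheory GRing.Theory Num.Theory.
Local Open Scope ring_scope.

Section Defs.
Variables (R : realType) (N A : finType).

(* A profile u in B^N is given by v^i, b_i, rho_i for each agent i:
   u_i(x, a) = v^i_a - x - rho_i * max{0, x - b_i}. *)
Definition util (v : N -> A -> R) (b rho : N -> R) (i : N) (x : R) (a : A) : R :=
  v i a - x - rho i * Num.max 0 (x - b i).

Definition allocation (m : R) (r : A -> R) (sigma : N -> A) : Prop :=
  bijective sigma /\ \sum_(a : A) r a = m.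

Definition envy_free (v : N -> A -> R) (b rho : N -> R) (r : A -> R)
    (sigma : N -> A) : Prop :=
  forall i j : N,
    util v b rho i (r (sigma j)) (sigma j) <= util v b rho i (r (sigma i)) (sigma i).

Definition inF (v : N -> A -> R) (b rho : N -> R) (m : R) (r : A -> R)
    (sigma : N -> A) : Prop :=
  allocation m r sigma /\ envy_free v b rho r sigma.

Definition lam (b rho : N -> R) (r : A -> R) (i : N) (a : A) : R :=
  if b i < r a then 1 + rho i else 1.

Definition lamL (v : N -> A -> R) (b rho : N -> R) (m : R) (r : A -> R)
    (Lam : R) (i : N) (a : A) : R :=
  if `[< exists sigma, inF v b rho m r sigma /\
          util v b rho i (r (sigma i)) (sigma i) = util v b rho i (r a) a >]
  then lam b rho r i a else Lam.

Definition is_max_sol (v : N -> A -> R) (b rho : N -> R) (m : R) (r : A -> R)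
    (Lam : R) (mu : N -> A) : Prop :=
  bijective mu /\
  forall gamma : N -> A, bijective gamma ->
    \sum_(i : N) ln (lamL v b rho m r Lam i (gamma i))
      <= \sum_(i : N) ln (lamL v b rho m r Lam i (mu i)).

End Defs.

(* In an envy-free allocation every agent receives a utility-maximising room, so
   all envy-free allocations give each agent the same utility, and the weights
   lambda_{i sigma(i)}(u, r, Lambda) of any envy-free sigma are at least 1: its
   objective is nonnegative.  If mu gave some agent i a room of another utility
   level, the weight of (i, mu i) would be Lambda, and since every weight is at
   most 1 + rho_j, the objective of mu would be at most
   ln Lambda + sum_j ln (1 + rho_j) < 0 once Lambda is small enough. *)
From HB Require Import structures.
From mathcomp Require Import all_boot all_order all_algebra.
From mathcomp Require Import boolp reals sequences exp.
Import Order.TTheory GRing.Theory Num.Theory.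
Local Open Scope ring_scope.

Set Implicit Arguments.
Unset Strict Implicit.
Unset Printing Implicit Defensive.

Section EnvyFreeUtility.
Variables (R : realType) (N A : finType).
Variables (v : N -> A -> R) (b rho : N -> R) (m : R) (r : A -> R).

Local Notation u := (util v b rho).
Local Notation EF := (inF v b rho m r).

Lemma inF_util_max sigma i a :
  EF sigma -> u i (r a) a <= u i (r (sigma i)) (sigma i).
Proof.
move=> [[[g sigmaK gK] _] ef].
by have := ef i (g a); rewrite gK.
Qed.

Lemma inF_util_eq sigma tau i :
  EF sigma -> EF tau -> u i (r (sigma i)) (sigma i) = u i (r (tau i)) (tau i).
Proof. by move=> sF tF; apply/eqP; rewrite eq_le !inF_util_max. Qed.

End EnvyFreeUtility.

Section LogWeights.
Variables (R : realType) (N A : finType).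
Variables (v : N -> A -> R) (b rho : N -> R) (m : R) (r : A -> R).
Hypothesis rho_ge0 : forall i, 0 <= rho i.

Local Notation u := (util v b rho).
Local Notation EF := (inF v b rho m r).
Local Notation lamL := (lamL v b rho m r).

Lemma lam_ge1 i a : 1 <= lam b rho r i a.
Proof. by rewrite /lam; case: ifP; rewrite ?lerDl. Qed.

Lemma lam_le i a : lam b rho r i a <= 1 + rho i.
Proof. by rewrite /lam; case: ifP; rewrite ?lerDl. Qed.

Lemma ln_lamL_le Lam i a :
  Lam <= 1 -> ln (lamL Lam i a) <= ln (1 + rho i).
Proof.
move=> Lam_le1; rewrite /lamL; case: ifP => _.
  by rewrite ler_ln ?posrE ?lam_le // (lt_le_trans ltr01) ?lam_ge1 ?lerDl.
by rewrite (le_trans (ln_le0 Lam_le1)) ?ln_ge0 ?lerDl.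
Qed.

Lemma sum_ln_lamL_inF_ge0 Lam sigma :
  EF sigma -> 0 <= \sum_i ln (lamL Lam i (sigma i)).
Proof.
move=> sF; apply: sumr_ge0 => i _; rewrite /lamL.
case: asboolP => [_|[]]; first exact/ln_ge0/lam_ge1.
by exists sigma.
Qed.

Lemma sum_ln_lamL_lt0 Lam gamma i :
  ln Lam + \sum_j ln (1 + rho j) < 0 ->
  ~ (exists sigma, EF sigma /\ u i (r (sigma i)) (sigma i) = u i (r (gamma i)) (gamma i)) ->
  \sum_j ln (lamL Lam j (gamma j)) < 0.
Proof.
move=> small notEF.
have C_ge0 : 0 <= \sum_j ln (1 + rho j).
  by apply: sumr_ge0 => j _; rewrite ln_ge0 ?lerDl.
have Lam_le1 : Lam <= 1.
  rewrite leNgt; apply/negP => /ln_gt0 /ltW lnLam_ge0.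
  by move: small; rewrite ltNge addr_ge0.
have lamL_i : lamL Lam i (gamma i) = Lam by rewrite /lamL; case: asboolP.
rewrite (bigD1 i) //= lamL_i; apply: le_lt_trans small; rewrite lerD2l.
rewrite [leRHS](bigD1 i) //= -[leLHS]add0r.
by apply: lerD; [rewrite ln_ge0 ?lerDl | apply: ler_sum => j _; exact: ln_lamL_le].
Qed.

Lemma is_max_sol_util_eq Lam mu sigma i :
  ln Lam + \sum_j ln (1 + rho j) < 0 -> (exists tau, EF tau) ->
  is_max_sol v b rho m r Lam mu -> EF sigma ->
  u i (r (mu i)) (mu i) = u i (r (sigma i)) (sigma i).
Proof.
move=> small [tau tF] [_ mu_max] sF.
case: (asboolP (exists sigma', EF sigma' /\
  u i (r (sigma' i)) (sigma' i) = u i (r (mu i)) (mu i))) => [[s' [s'F <-]]|notEF].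
  exact: inF_util_eq i s'F sF.
have [[tau_bij _] _] := tF.
have := le_trans (sum_ln_lamL_inF_ge0 Lam tF) (mu_max tau tau_bij).
by rewrite leNgt (sum_ln_lamL_lt0 small notEF).
Qed.

End LogWeights.

Theorem lemma1 (R : realType) (rhos : seq R)
  (hrho1 : head 0 rhos = 0) (hrhos : all (fun x => 0 <= x) rhos)
  (n : nat) (A : finType) (hA : #|A| = n)
  (v : 'I_n -> A -> R) (b rho : 'I_n -> R)
  (hb : forall i, 0 <= b i) (hrho : forall i, rho i \in rhos)
  (m : R) (r : A -> R)
  (hF : exists sigma : 'I_n -> A, inF v b rho m r sigma) :
  exists Lam : R, 0 < Lam /\
    forall Lam' : R, 0 < Lam' -> Lam' <= Lam ->
      forall mu : 'I_n -> A, is_max_sol v b rho m r Lam' mu ->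
        forall (i : 'I_n) (sigma : 'I_n -> A), inF v b rho m r sigma ->
          util v b rho i (r (mu i)) (mu i) = util v b rho i (r (sigma i)) (sigma i).
Proof.
have rho_ge0 j : 0 <= rho j by exact: (allP hrhos _ (hrho j)).
set C := \sum_j ln (1 + rho j).
exists (expR (- (C + 1))); split; first exact: expR_gt0.
move=> Lam Lam_gt0 Lam_le mu mu_max i sigma sF.
apply: (is_max_sol_util_eq rho_ge0 i _ hF mu_max sF).
have ln_Lam_le : ln Lam <= - (C + 1).
  by rewrite -[leRHS]expRK ler_ln // posrE expR_gt0.
apply: (le_lt_trans (lerD ln_Lam_le (lexx C))).
by rewrite opprD addrAC addNr add0r ltrN10.
Qed.
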